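(* Let $f$ be the polynomial $$f(t)=\frac{2431}{80}t^9-\frac{1287}{20}t^7+\frac{18333}{400}t^5+\frac{343}{40}t^4-\frac{83}{10}t^3-\frac{213}{100}t^2+\frac{t}{10}-\frac{1}{200},$$ let $-t_0$ (with $t_0\approx 0.5907$) be the unique root of $f$ in $[-1,1/2]$, and let $\theta_0=\arccos t_0\approx 53.794^\circ$. Let $e_0\in\mathbf{S}^2$ and let $y_1,\dots,y_m\in\mathbf{S}^2$ satisfy $\mathrm{dist}(y_i,y_j)\ge60^\circ$ for all $i\ne j$ and $\mathrm{dist}(e_0,y_i)<\theta_0$ for all $i$. Then $m\le 4$.
   Context: $\mathrm{dist}$ denotes the angular (spherical) distance on the unit sphere $\mathbf{S}^2\subset\mathbb{R}^3$. *)

From Stdlib Require Import Reals Lra.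
Open Scope R_scope.

Definition vec3 : Type := (R * R * R)%type.

Definition dot3 (u v : vec3) : R :=
  let '(a1, a2, a3) := u in let '(b1, b2, b3) := v in a1*b1 + a2*b2 + a3*b3.

Definition on_S2 (u : vec3) : Prop := dot3 u u = 1.

Definition sdist (u v : vec3) : R := acos (dot3 u v).

Definition deg (x : R) : R := x * PI / 180.

Definition f_poly (t : R) : R :=
  2431/80 * t^9 - 1287/20 * t^7 + 18333/400 * t^5 + 343/40 * t^4
  - 83/10 * t^3 - 213/100 * t^2 + t/10 - 1/200.

From Stdlib Require Import Reals Lra Psatz Lia.
Open Scope R_scope.

(* Every point y of the cap has height z = e.y > t0 >= 0.59, because f changes
   sign on [-1, -0.59]; in particular z^2 >= 1/3.  Project the points to the
   plane orthogonal to e and normalize.  For two points of height z, z' with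
   z^2, z'^2 >= 1/3 and y.y' <= 1/2 the projections satisfy
   u.u' = (y.y' - z z') / (sqrt(1 - z^2) sqrt(1 - z'^2)) <= 1/4.
   No five unit vectors of the plane have pairwise cosines <= 1/4: the Delsarte
   polynomial P(d) = (d - 1/4)(d + 4/5)^2 has nonnegative Chebyshev coefficients
   with constant term 103/200, so for n such vectors
   n^2 * 103/200 <= sum_(i,j) P(u_i.u_j) <= n * P(1) = n * 243/100. *)

Definition dsum (K : nat -> nat -> R) (N : nat) : R :=
  sum_f_R0 (fun i => sum_f_R0 (fun j => K i j) N) N.

Lemma dsum_ext (K L : nat -> nat -> R) N :
  (forall i j, (i <= N)%nat -> (j <= N)%nat -> K i j = L i j) ->
  dsum K N = dsum L N.
Proof.
  intros HKL; unfold dsum.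
  apply sum_eq; intros i Hi; apply sum_eq; intros j Hj; auto.
Qed.

Lemma dsum_plus (K L : nat -> nat -> R) N :
  dsum (fun i j => K i j + L i j) N = dsum K N + dsum L N.
Proof.
  unfold dsum; rewrite <- sum_plus.
  apply sum_eq; intros i _; apply sum_plus.
Qed.

Lemma dsum_scal (c : R) (K : nat -> nat -> R) N :
  dsum (fun i j => c * K i j) N = c * dsum K N.
Proof.
  unfold dsum; rewrite scal_sum.
  apply sum_eq; intros i _; rewrite (Rmult_comm _ c), scal_sum.
  apply sum_eq; intros j _; ring.
Qed.

Lemma dsum_const (c : R) N : dsum (fun _ _ => c) N = c * INR (S N) ^ 2.
Proof. unfold dsum; rewrite !sum_cte; ring. Qed.

Lemma dsum_mul_sum (a : nat -> R) N :
  dsum (fun i j => a i * a j) N = (sum_f_R0 a N) ^ 2.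
Proof.
  unfold dsum.
  rewrite (sum_eq _ (fun i => a i * sum_f_R0 a N)).
  - rewrite <- scal_sum; ring.
  - intros i _; rewrite scal_sum; apply sum_eq; intros j _; ring.
Qed.

Lemma dsum_dot2_ge0 (a b : nat -> R) N :
  0 <= dsum (fun i j => a i * a j + b i * b j) N.
Proof.
  rewrite dsum_plus, !dsum_mul_sum.
  apply Rplus_le_le_0_compat; apply pow2_ge_0.
Qed.

Lemma sum_le_term (g : nat -> R) N i : (i <= N)%nat ->
  (forall j, (j <= N)%nat -> j <> i -> g j <= 0) -> sum_f_R0 g N <= g i.
Proof.
  revert i; induction N as [|N IHN]; intros i Hi Hg.
  - replace i with 0%nat by lia; simpl; lra.
  - simpl. destruct (Nat.eq_dec i (S N)) as [->|Hne].
    + assert (Hrest : sum_f_R0 g N <= sum_f_R0 (fun _ => 0) N)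
        by (apply sum_Rle; intros j Hj; apply Hg; lia).
      rewrite sum_cte in Hrest; lra.
    + assert (sum_f_R0 g N <= g i) by (apply IHN; [lia | intros j Hj Hji; apply Hg; lia]).
      assert (g (S N) <= 0) by (apply Hg; lia).
      lra.
Qed.

Lemma dsum_le_diag (K : nat -> nat -> R) N :
  (forall i j, (i <= N)%nat -> (j <= N)%nat -> i <> j -> K i j <= 0) ->
  dsum K N <= sum_f_R0 (fun i => K i i) N.
Proof.
  intros HK; apply sum_Rle; intros i Hi.
  apply sum_le_term; auto.
Qed.

Definition delsarte (d : R) : R := (d - 1/4) * (d + 4/5) ^ 2.

(* Real and imaginary parts of (x + i y)^2 and (x + i y)^3, i.e. cos and sin of
   2t and 3t when (x, y) = (cos t, sin t). *)
Definition re_sqr (x y : R) : R := x ^ 2 - y ^ 2.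
Definition im_sqr (x y : R) : R := 2 * x * y.
Definition re_cube (x y : R) : R := x ^ 3 - 3 * x * y ^ 2.
Definition im_cube (x y : R) : R := 3 * x ^ 2 * y - y ^ 3.

Lemma delsarte_chebyshev (x y x' y' : R) :
  x ^ 2 + y ^ 2 = 1 -> x' ^ 2 + y' ^ 2 = 1 ->
  delsarte (x * x' + y * y') =
  103/200 + 99/100 * (x * x' + y * y')
  + 27/40 * (re_sqr x y * re_sqr x' y' + im_sqr x y * im_sqr x' y')
  + 1/4 * (re_cube x y * re_cube x' y' + im_cube x y * im_cube x' y').
Proof.
  intros Hu Hu'; set (d := x * x' + y * y').
  transitivity (1/4 * (4 * d ^ 3 - 3 * d * ((x ^ 2 + y ^ 2) * (x' ^ 2 + y' ^ 2)))
    + 27/40 * (2 * d ^ 2 - (x ^ 2 + y ^ 2) * (x' ^ 2 + y' ^ 2)) + 99/100 * d + 103/200).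
  - rewrite Hu, Hu'; unfold delsarte; field.
  - unfold re_sqr, im_sqr, re_cube, im_cube, d; field.
Qed.

Lemma delsarte_nonpos (d : R) : d <= 1/4 -> delsarte d <= 0.
Proof.
  intros Hd; unfold delsarte.
  assert (0 <= (d + 4/5) ^ 2) by apply pow2_ge_0.
  nra.
Qed.

Lemma planar_code_card (x y : nat -> R) (N : nat) :
  (forall i, (i <= N)%nat -> x i ^ 2 + y i ^ 2 = 1) ->
  (forall i j, (i <= N)%nat -> (j <= N)%nat -> i <> j ->
     x i * x j + y i * y j <= 1/4) ->
  (N <= 3)%nat.
Proof.
  intros Hunit Hcode.
  set (G := fun i j => delsarte (x i * x j + y i * y j)).
  assert (Hlow : 103/200 * INR (S N) ^ 2 <= dsum G N).
  { rewrite (dsum_ext G (fun i j => 103/200 +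
      (99/100 * (x i * x j + y i * y j)
       + (27/40 * (re_sqr (x i) (y i) * re_sqr (x j) (y j)
                   + im_sqr (x i) (y i) * im_sqr (x j) (y j))
          + 1/4 * (re_cube (x i) (y i) * re_cube (x j) (y j)
                   + im_cube (x i) (y i) * im_cube (x j) (y j)))))).
    2: { intros i j Hi Hj; unfold G; rewrite delsarte_chebyshev; auto; ring. }
    rewrite !dsum_plus, !dsum_scal, dsum_const.
    pose proof (dsum_dot2_ge0 x y N).
    pose proof (dsum_dot2_ge0 (fun i => re_sqr (x i) (y i)) (fun i => im_sqr (x i) (y i)) N).
    pose proof (dsum_dot2_ge0 (fun i => re_cube (x i) (y i)) (fun i => im_cube (x i) (y i)) N).
    simpl in *; lra. }
  assert (Hup : dsum G N <= 243/100 * INR (S N)).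
  { rewrite <- sum_cte.
    apply Rle_trans with (sum_f_R0 (fun i => G i i) N).
    - apply dsum_le_diag; intros i j Hi Hj Hij; apply delsarte_nonpos; auto.
    - apply sum_Rle; intros i Hi; unfold G.
      replace (x i * x i + y i * y i) with 1 by (rewrite <- (Hunit i Hi); ring).
      unfold delsarte; lra. }
  assert (Hcard : INR (S N) < 5).
  { assert (0 < INR (S N)) by (apply lt_0_INR; lia). nra. }
  destruct (Nat.le_gt_cases N 3) as [|HN]; auto.
  apply le_INR in HN; rewrite S_INR in Hcard; simpl in HN; lra.
Qed.

Definition vsub_scaled (u : vec3) (c : R) (v : vec3) : vec3 :=
  let '(a1, a2, a3) := u in let '(b1, b2, b3) := v in
  (a1 - c * b1, a2 - c * b2, a3 - c * b3).

Definition det3 (u v w : vec3) : R :=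
  let '(a1, a2, a3) := u in let '(b1, b2, b3) := v in let '(c1, c2, c3) := w in
  a1 * (b2 * c3 - b3 * c2) - a2 * (b1 * c3 - b3 * c1) + a3 * (b1 * c2 - b2 * c1).

Lemma dot3_sym (u v : vec3) : dot3 u v = dot3 v u.
Proof. destruct u as [[? ?] ?], v as [[? ?] ?]; simpl; ring. Qed.

Lemma dot3_vsub_scaled_l (u : vec3) (c : R) (v w : vec3) :
  dot3 (vsub_scaled u c v) w = dot3 u w - c * dot3 v w.
Proof. destruct u as [[? ?] ?], v as [[? ?] ?], w as [[? ?] ?]; simpl; ring. Qed.

Lemma dot3_vsub_scaled_r (u : vec3) (c : R) (v w : vec3) :
  dot3 w (vsub_scaled u c v) = dot3 w u - c * dot3 w v.
Proof. rewrite dot3_sym, dot3_vsub_scaled_l, (dot3_sym u), (dot3_sym v); ring. Qed.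

Lemma dot3_self_ge0 (u : vec3) : 0 <= dot3 u u.
Proof. destruct u as [[a b] c]; simpl; nra. Qed.

Lemma dot3_self_eq0 (u v : vec3) : dot3 u u = 0 -> dot3 u v = 0.
Proof.
  destruct u as [[a b] c], v as [[d e] f]; simpl; intros H.
  assert (a = 0) by nra; assert (b = 0) by nra; assert (c = 0) by nra.
  subst; ring.
Qed.

Lemma dot3_unit_bound (u v : vec3) :
  dot3 u u = 1 -> dot3 v v = 1 -> -1 <= dot3 u v <= 1.
Proof.
  destruct u as [[a b] c], v as [[d e] f]; simpl; intros Hu Hv.
  assert (0 <= (a - d) ^ 2 + (b - e) ^ 2 + (c - f) ^ 2) by
    (repeat apply Rplus_le_le_0_compat; apply pow2_ge_0).
  assert (0 <= (a + d) ^ 2 + (b + e) ^ 2 + (c + f) ^ 2) by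
    (repeat apply Rplus_le_le_0_compat; apply pow2_ge_0).
  split; nra.
Qed.

Lemma det3_mul_det3 (p q e w : vec3) :
  det3 p e w * det3 q e w =
  dot3 p q * (dot3 e e * dot3 w w - dot3 e w * dot3 w e)
  - dot3 p e * (dot3 e q * dot3 w w - dot3 e w * dot3 w q)
  + dot3 p w * (dot3 e q * dot3 w e - dot3 e e * dot3 w q).
Proof.
  destruct p as [[? ?] ?], q as [[? ?] ?], e as [[? ?] ?], w as [[? ?] ?]; simpl; ring.
Qed.

Lemma perp_plane_lagrange (e p q w : vec3) :
  dot3 e e = 1 -> dot3 p e = 0 -> dot3 q e = 0 -> dot3 w e = 0 ->
  dot3 p w * dot3 q w + det3 p e w * det3 q e w = dot3 p q * dot3 w w.
Proof.
  intros He Hp Hq Hw.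
  rewrite det3_mul_det3, (dot3_sym e w), (dot3_sym e q), (dot3_sym w q), He, Hp, Hq, Hw.
  ring.
Qed.

Definition hor (e y : vec3) : vec3 := vsub_scaled y (dot3 e y) e.

Lemma hor_perp (e y : vec3) : dot3 e e = 1 -> dot3 (hor e y) e = 0.
Proof. intros He; unfold hor; rewrite dot3_vsub_scaled_l, He, dot3_sym; ring. Qed.

Lemma dot3_hor (e y y' : vec3) : dot3 e e = 1 ->
  dot3 (hor e y) (hor e y') = dot3 y y' - dot3 e y * dot3 e y'.
Proof.
  intros He; unfold hor.
  rewrite dot3_vsub_scaled_l, !dot3_vsub_scaled_r, He, (dot3_sym y e); ring.
Qed.

Definition norm3 (u : vec3) : R := sqrt (dot3 u u).

Lemma norm3_sqr (u : vec3) : norm3 u * norm3 u = dot3 u u.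
Proof. apply sqrt_sqrt, dot3_self_ge0. Qed.

Lemma norm3_ge0 (u : vec3) : 0 <= norm3 u.
Proof. apply sqrt_pos. Qed.

Lemma norm3_gt0 (u : vec3) : 0 < dot3 u u -> 0 < norm3 u.
Proof. apply sqrt_lt_R0. Qed.

(* Cosine and sine of the angle from w to p, for p and w orthogonal to the unit
   vector e, the plane being oriented by e. *)
Definition frame_x (w p : vec3) : R := dot3 p w / (norm3 p * norm3 w).
Definition frame_y (e w p : vec3) : R := det3 p e w / (norm3 p * norm3 w).

Lemma frame_dot (e w p q : vec3) :
  dot3 e e = 1 -> dot3 p e = 0 -> dot3 q e = 0 -> dot3 w e = 0 ->
  0 < dot3 p p -> 0 < dot3 q q -> 0 < dot3 w w ->
  frame_x w p * frame_x w q + frame_y e w p * frame_y e w q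
  = dot3 p q / (norm3 p * norm3 q).
Proof.
  intros He Hp Hq Hw Np Nq Nw.
  pose proof (norm3_gt0 p Np); pose proof (norm3_gt0 q Nq); pose proof (norm3_gt0 w Nw).
  unfold frame_x, frame_y.
  transitivity ((dot3 p w * dot3 q w + det3 p e w * det3 q e w)
                / (norm3 p * norm3 q * (norm3 w * norm3 w))).
  - field; lra.
  - rewrite perp_plane_lagrange, norm3_sqr by assumption; field; lra.
Qed.

Lemma frame_unit (e w p : vec3) :
  dot3 e e = 1 -> dot3 p e = 0 -> dot3 w e = 0 -> 0 < dot3 p p -> 0 < dot3 w w ->
  frame_x w p ^ 2 + frame_y e w p ^ 2 = 1.
Proof.
  intros He Hp Hw Np Nw.
  assert (0 < norm3 p) by (apply norm3_gt0; assumption).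
  replace (frame_x w p ^ 2 + frame_y e w p ^ 2) with
    (frame_x w p * frame_x w p + frame_y e w p * frame_y e w p) by ring.
  rewrite frame_dot, <- norm3_sqr by assumption.
  field; lra.
Qed.

Lemma cap_product_ineq (a b : R) :
  0 <= a -> 0 <= b -> 1/3 <= a ^ 2 -> 1/3 <= b ^ 2 -> a * b <= 1/2 ->
  (2 - 4 * a * b) ^ 2 <= (1 - a ^ 2) * (1 - b ^ 2).
Proof.
  intros Ha Hb Ha2 Hb2 Hab.
  assert (0 <= (a ^ 2 - 1/3) * (b ^ 2 - 1/3)) by (apply Rmult_le_pos; lra).
  assert (1/9 <= (a * b) ^ 2).
  { replace ((a * b) ^ 2) with (a ^ 2 * b ^ 2) by ring.
    replace (1/9) with (1/3 * (1/3)) by field.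
    apply Rmult_le_compat; lra. }
  assert (0 <= a * b) by (apply Rmult_le_pos; assumption).
  assert (1/3 <= a * b) by nra.
  assert (0 <= (a * b - 1/3) * (5/9 - a * b)) by (apply Rmult_le_pos; lra).
  nra.
Qed.

Lemma hor_dot_le (e y y' : vec3) :
  dot3 e e = 1 -> dot3 y y = 1 -> dot3 y' y' = 1 ->
  0 <= dot3 e y -> 1/3 <= dot3 e y ^ 2 -> 0 <= dot3 e y' -> 1/3 <= dot3 e y' ^ 2 ->
  dot3 y y' <= 1/2 ->
  dot3 (hor e y) (hor e y') <= 1/4 * (norm3 (hor e y) * norm3 (hor e y')).
Proof.
  intros He Hy Hy' Ha Ha2 Hb Hb2 Hyy'.
  assert (Hs := norm3_sqr (hor e y)); assert (Hs' := norm3_sqr (hor e y')).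
  rewrite dot3_hor, Hy in Hs by assumption; rewrite dot3_hor, Hy' in Hs' by assumption.
  rewrite dot3_hor by assumption.
  pose proof (norm3_ge0 (hor e y)); pose proof (norm3_ge0 (hor e y')).
  set (a := dot3 e y) in *; set (b := dot3 e y') in *.
  set (s := norm3 (hor e y)) in *; set (s' := norm3 (hor e y')) in *.
  assert (Hss : 0 <= s * s') by (apply Rmult_le_pos; assumption).
  assert (2 - 4 * a * b <= s * s').
  { destruct (Rle_lt_dec (a * b) (1/2)) as [Hab|Hab]; [|lra].
    assert ((2 - 4 * a * b) ^ 2 <= (s * s') ^ 2).
    { replace ((s * s') ^ 2) with ((s * s) * (s' * s')) by ring.
      rewrite Hs, Hs'.
      pose proof (cap_product_ineq a b Ha Hb Ha2 Hb2 Hab); nra. }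
    nra. }
  lra.
Qed.

Lemma hor_dot_self_gt0 (e y y' : vec3) :
  dot3 e e = 1 -> dot3 y y = 1 -> dot3 y' y' = 1 ->
  1/2 < dot3 e y -> 1/2 < dot3 e y' -> dot3 y y' <= 1/2 ->
  0 < dot3 (hor e y) (hor e y).
Proof.
  intros He Hy Hy' Ha Hb Hyy'.
  destruct (Rle_lt_or_eq_dec _ _ (dot3_self_ge0 (hor e y))) as [|Hpole]; [assumption|].
  exfalso.
  assert (Hw := dot3_self_eq0 _ (hor e y') (eq_sym Hpole)).
  rewrite dot3_hor in Hpole, Hw by assumption.
  assert (dot3 e y <= 1) by (apply dot3_unit_bound; assumption).
  assert (dot3 e y = 1) by nra.
  nra.
Qed.

Lemma cap_code_card (e : vec3) (y : nat -> vec3) (N : nat) :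
  dot3 e e = 1 -> (1 <= N)%nat ->
  (forall i, (i <= N)%nat -> dot3 (y i) (y i) = 1) ->
  (forall i, (i <= N)%nat -> 0 <= dot3 e (y i)) ->
  (forall i, (i <= N)%nat -> 1/3 <= dot3 e (y i) ^ 2) ->
  (forall i j, (i <= N)%nat -> (j <= N)%nat -> i <> j -> dot3 (y i) (y j) <= 1/2) ->
  (N <= 3)%nat.
Proof.
  intros He HN Hunit Hz Hz2 Hcode.
  set (w := fun i => hor e (y i)).
  assert (Hhigh : forall i, (i <= N)%nat -> 1/2 < dot3 e (y i)).
  { intros i Hi; specialize (Hz i Hi); specialize (Hz2 i Hi); nra. }
  assert (Hw : forall i, (i <= N)%nat -> 0 < dot3 (w i) (w i)).
  { intros i Hi; set (j := if Nat.eq_dec i 0 then 1%nat else 0%nat).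
    assert (Hj : (j <= N)%nat) by (unfold j; destruct (Nat.eq_dec i 0); lia).
    assert (Hji : i <> j) by (unfold j; destruct (Nat.eq_dec i 0); lia).
    exact (hor_dot_self_gt0 e (y i) (y j) He (Hunit i Hi) (Hunit j Hj)
             (Hhigh i Hi) (Hhigh j Hj) (Hcode i j Hi Hj Hji)). }
  apply (planar_code_card (fun i => frame_x (w 0%nat) (w i))
                          (fun i => frame_y e (w 0%nat) (w i))).
  - intros i Hi; apply frame_unit; try apply hor_perp; auto; apply Hw; lia.
  - intros i j Hi Hj Hij.
    rewrite frame_dot; try apply hor_perp; auto; try (apply Hw; lia).
    pose proof (norm3_gt0 _ (Hw i Hi)); pose proof (norm3_gt0 _ (Hw j Hj)).
    apply (Rmult_le_reg_r (norm3 (w i) * norm3 (w j))); [nra|].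
    replace (dot3 (w i) (w j) / (norm3 (w i) * norm3 (w j)) * (norm3 (w i) * norm3 (w j)))
      with (dot3 (w i) (w j)) by (field; lra).
    apply hor_dot_le; auto.
Qed.

Lemma acos_decreasing (x x' : R) : -1 <= x -> x' <= 1 -> x < x' -> acos x' < acos x.
Proof.
  intros Hx Hx' Hlt.
  destruct (Rlt_le_dec (acos x') (acos x)) as [|Hle]; [assumption|exfalso].
  pose proof (acos_bound x); pose proof (acos_bound x').
  destruct (Rle_lt_or_eq_dec _ _ Hle) as [Hlt'|Heq].
  - assert (Hcos : cos (acos x') < cos (acos x)) by (apply cos_decreasing_1; lra).
    rewrite !cos_acos in Hcos by lra; lra.
  - assert (Hcos : cos (acos x) = cos (acos x')) by (rewrite Heq; reflexivity).
    rewrite !cos_acos in Hcos by lra; lra.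
Qed.

Lemma acos_lt_reg (x x' : R) : -1 <= x <= 1 -> -1 <= x' <= 1 -> acos x < acos x' -> x' < x.
Proof.
  intros Hx Hx' Hlt.
  destruct (Rlt_le_dec x' x) as [|Hle]; [assumption|exfalso].
  destruct (Rle_lt_or_eq_dec _ _ Hle) as [Hlt'|<-]; [|lra].
  pose proof (acos_decreasing x x' ltac:(lra) ltac:(lra) Hlt'); lra.
Qed.

Lemma dot3_le_half_of_sdist (u v : vec3) :
  on_S2 u -> on_S2 v -> deg 60 <= sdist u v -> dot3 u v <= 1/2.
Proof.
  unfold on_S2, sdist, deg; intros Hu Hv Hdist.
  pose proof (dot3_unit_bound u v Hu Hv).
  assert (Hhalf : acos (1/2) = 60 * PI / 180).
  { rewrite <- cos_PI3, acos_cos; [field|].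
    pose proof PI_RGT_0; split; lra. }
  destruct (Rle_lt_dec (dot3 u v) (1/2)) as [|Hgt]; [assumption|].
  pose proof (acos_decreasing (1/2) (dot3 u v) ltac:(lra) ltac:(lra) Hgt); lra.
Qed.

Lemma f_poly_unique_root_le (r : R) :
  (forall s, -1 <= s <= 1/2 -> f_poly s = 0 -> s = r) -> r <= -59/100.
Proof.
  intros Huniq.
  assert (Hcont : continuity (fun s => - f_poly s)) by (unfold f_poly; reg).
  destruct (IVT (fun s => - f_poly s) (-1) (-59/100) Hcont) as [s [Hs Hroot]];
    try (unfold f_poly; lra).
  assert (s = r) by (apply Huniq; lra).
  lra.
Qed.

Theorem mainTheorem5 (t0 : R)
  (Ht0_in : -1 <= - t0 <= 1/2)
  (Ht0_root : f_poly (- t0) = 0)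
  (Ht0_unique : forall s : R, -1 <= s <= 1/2 -> f_poly s = 0 -> s = - t0)
  (e0 : vec3) (He0 : on_S2 e0)
  (m : nat) (y : nat -> vec3)
  (Hy : forall i : nat, (i < m)%nat -> on_S2 (y i))
  (Hsep : forall i j : nat, (i < m)%nat -> (j < m)%nat -> i <> j ->
            deg 60 <= sdist (y i) (y j))
  (Hcap : forall i : nat, (i < m)%nat -> sdist e0 (y i) < acos t0) :
  (m <= 4)%nat.
Proof.
  pose proof (f_poly_unique_root_le (- t0) Ht0_unique) as Ht0.
  assert (Hz : forall i, (i < m)%nat -> t0 < dot3 e0 (y i)).
  { intros i Hi; apply acos_lt_reg; [| lra | exact (Hcap i Hi)].
    apply dot3_unit_bound; [exact He0 | exact (Hy i Hi)]. }
  destruct (Nat.le_gt_cases m 1) as [|Hm]; [lia|].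
  enough (Nat.pred m <= 3)%nat by lia.
  apply (cap_code_card e0 y); [assumption | lia | | | |].
  - intros i Hi; apply Hy; lia.
  - intros i Hi; specialize (Hz i ltac:(lia)); lra.
  - intros i Hi; specialize (Hz i ltac:(lia)); nra.
  - intros i j Hi Hj Hij; apply dot3_le_half_of_sdist; [apply Hy | apply Hy | apply Hsep]; lia.
Qed.
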